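(* Let $G$ be a digraph and $r\ge1$. Then the distance-$r$ VC-dimension of $G$ is at most $(r+2)\cdot(2\,\mathrm{wcol}_r(G))^2$.
   Context: For a linear order $L$ of $V(G)$, $u$ is weakly $r$-reachable from $v$ if there is a directed path of length at most $r$ from $u$ to $v$ or from $v$ to $u$ on which $u$ is the $L$-minimum; $\mathrm{WReach}_r[G,L,v]$ is the set of such $u$; $\mathrm{wcol}_r(G)=\min_L\max_{v}|\mathrm{WReach}_r[G,L,v]|$. $N_r^-(v)$ is the set of vertices from which $v$ is reachable by a directed path of length at most $r$. The distance-$r$ VC-dimension of $G$ is the VC-dimension of the set family $\{N_r^-(v) : v\in V(G)\}$ over ground set $V(G)$, i.e. the maximum size of a set $X\subseteq V(G)$ with $\{X\cap N_r^-(v): v\in V(G)\}=2^X$. *)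

From mathcomp Require Import all_boot.
Set Implicit Arguments. Unset Strict Implicit. Unset Printing Implicit Defensive.

Section Defs.
Variable T : finType.

Definition bpath (e : rel T) (r : nat) (P : pred T) (x y : T) : bool :=
  [exists k : 'I_r.+1, exists p : k.-tuple T,
     [&& path e x p, last x p == y & all P (x :: p)]].

(* Linear orders of V(G): bijective rankings L : V(G) -> {0,..,|V(G)|-1};
   u <_L w iff L u < L w. *)
Definition linorder (L : {ffun T -> 'I_#|T|}) : bool := injectiveb L.

Definition WReach (e : rel T) (r : nat) (L : {ffun T -> 'I_#|T|}) (v : T)
  : {set T} :=
  [set u | bpath e r (fun w => L u <= L w) u v
        || bpath e r (fun w => L u <= L w) v u].

Definition wcol (e : rel T) (r : nat) : nat :=
  \big[minn/#|T|]_(L : {ffun T -> 'I_#|T|} | linorder L)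
     \max_(v : T) #|WReach e r L v|.

Definition inNbh (e : rel T) (r : nat) (v : T) : {set T} :=
  [set u | bpath e r predT u v].

Definition shattered (e : rel T) (r : nat) (X : {set T}) : bool :=
  [forall S : {set T}, (S \subset X) ==>
     [exists v : T, X :&: inNbh e r v == S]].

Definition vcdim (e : rel T) (r : nat) : nat :=
  \max_(X : {set T} | shattered e r X) #|X|.

End Defs.

From mathcomp Require Import all_boot zify.
Set Implicit Arguments. Unset Strict Implicit. Unset Printing Implicit Defensive.

(* Fix an order L attaining c = wcol_r(G). A walk of length at most r from u
   to v splits at its L-minimum m, which is then weakly r-reachable from both
   u and v. Hence for a set X the trace X ∩ N_r^-(v) is determined by the at
   most c vertices m ∈ WReach_r[v] lying in some WReach_r[u], u ∈ X, each
   together with the set of lengths j ≤ r within which v is reachable from m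
   above m. For a shattered X this gives 2^|X| ≤ ((1 + c|X|) 2^(r+1))^c, which
   fails for |X| = (r+2)(2c)^2 + 1. *)

Section Walks.
Variables (T : finType) (e : rel T).

Lemma bpathP r (P : pred T) x y :
  reflect (exists p : seq T,
             [/\ size p <= r, path e x p, last x p = y & all P (x :: p)])
          (bpath e r P x y).
Proof.
apply: (iffP existsP) => [[k /existsP [p /and3P [ep /eqP lp Pp]]] | [p [sp ep lp Pp]]].
  by exists p; split; rewrite // size_tuple -ltnS.
have sp' : size p < r.+1 by [].
by exists (Ordinal sp'); apply/existsP; exists (in_tuple p); rewrite ep lp eqxx.
Qed.

Lemma bpath_leq i j (P : pred T) x y : i <= j -> bpath e i P x y -> bpath e j P x y.
Proof.
by move=> ij /bpathP [p [sp ep lp Pp]]; apply/bpathP; exists p; split; rewrite ?(leq_trans sp).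
Qed.

Lemma bpath_cat i j (P Q : pred T) x y z :
  bpath e i P x y -> bpath e j Q y z -> bpath e (i + j) predT x z.
Proof.
move=> /bpathP [p [sp ep lp _]] /bpathP [q [sq eq lq _]].
apply/bpathP; exists (p ++ q); split; last exact: all_predT.
- by rewrite size_cat leq_add.
- by rewrite cat_path ep lp eq.
- by rewrite last_cat lp.
Qed.

Lemma bpath_split_min r (f : T -> nat) x y : bpath e r predT x y ->
  exists m i j, [/\ i + j <= r, bpath e i (fun w => f m <= f w) x m
                 & bpath e j (fun w => f m <= f w) m y].
Proof.
move=> /bpathP [p [sp ep lp _]].
have [m pm fmin] := @arg_minnP _ x (mem (x :: p)) f (mem_head x p).
have above (s : seq T) : {subset s <= x :: p} -> all (fun w => f m <= f w) s.
  by move=> sub; apply/allP => w /sub /fmin.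
exists m; case: (splitPl pm) sp ep lp above => p1 p2 lp1.
rewrite size_cat cat_path last_cat lp1 => sp /andP [ep1 ep2] lp2 above.
exists (size p1), (size p2); split => //; apply/bpathP.
- exists p1; split => //; apply: above => w.
  by rewrite -cat_cons mem_cat => ->.
- exists p2; split => //; apply: above => w; rewrite inE => /predU1P [-> | wp2].
    by rewrite -lp1 -cat_cons mem_cat mem_last.
  by rewrite inE mem_cat wp2 !orbT.
Qed.

End Walks.

Section TraceCodes.
Variables (T : finType) (e : rel T) (r c : nat) (L : {ffun T -> 'I_#|T|}).
Hypothesis WReach_le : forall v, #|WReach e r L v| <= c.

Definition wInNbh (k : nat) (m : T) : {set T} :=
  [set u | bpath e k (fun w => L m <= L w) u m].

Definition WReach_cover (X : {set T}) : {set T} := \bigcup_(u in X) WReach e r L u.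

Definition code_letters (X : {set T}) : {set option T * {set 'I_r.+1}} :=
  setX (None |: [set Some m | m in WReach_cover X]) (powerset [set: 'I_r.+1]).

Definition decode (X : {set T}) (f : {ffun 'I_c -> option T * {set 'I_r.+1}}) :
    {set T} :=
  X :&: \bigcup_(i : 'I_c)
          if (f i).1 is Some m then \bigcup_(j in (f i).2) wInNbh (r - j) m else set0.

Definition encode (X : {set T}) (v : T) : {ffun 'I_c -> option T * {set 'I_r.+1}} :=
  let s := enum (WReach e r L v :&: WReach_cover X) in
  [ffun i : 'I_c => (if i < size s then Some (nth v s i) else None,
                     [set j : 'I_r.+1 |
                       bpath e j (fun w => L (nth v s i) <= L w) (nth v s i) v])].

Lemma encode_on X v : encode X v \in ffun_on (mem (code_letters X)).
Proof.
apply/ffun_onP => i; rewrite ffunE in_setX powersetE subsetT andbT in_setU1.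
case: ifP => [i_lt | _]; last by rewrite eqxx.
have : nth v _ i \in _ := mem_nth v i_lt.
by rewrite mem_enum inE => /andP [_ cover_m]; rewrite imset_f ?orbT.
Qed.

Lemma decode_encode X v : decode X (encode X v) = X :&: inNbh e r v.
Proof.
set s := enum (WReach e r L v :&: WReach_cover X).
have size_s : size s <= c.
  by rewrite -cardE (leq_trans (subset_leq_card (subsetIl _ _))) ?WReach_le.
apply/setP => u; rewrite !inE; case uX: (u \in X) => //=; apply/bigcupP/idP.
  case=> i _; rewrite ffunE /=; case: ifP => _; last by rewrite inE.
  case/bigcupP => j; rewrite !inE => m_v u_m.
  by rewrite -(subnK (ltnSE (ltn_ord j))); apply: bpath_cat u_m m_v.
case/(bpath_split_min (fun w => L w : nat)) => [m [i [j [ij u_m m_v]]]].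
have m_s : m \in s.
  have v_m : m \in WReach e r L v by rewrite inE (bpath_leq _ m_v) //; lia.
  have u_m' : m \in WReach e r L u by rewrite inE (bpath_leq _ u_m) ?orbT //; lia.
  by rewrite /s mem_enum inE v_m /WReach_cover; apply/bigcupP; exists u.
have idx_lt : index m s < c by rewrite (leq_trans _ size_s) ?index_mem.
exists (Ordinal idx_lt) => //; rewrite ffunE /= index_mem m_s nth_index //.
have j_lt : j < r.+1 by lia.
apply/bigcupP; exists (Ordinal j_lt); first by rewrite inE.
by rewrite inE (bpath_leq _ u_m) //=; lia.
Qed.

Lemma card_WReach_cover X : #|WReach_cover X| <= c * #|X|.
Proof.
rewrite mulnC -sum_nat_const /WReach_cover.
elim/big_rec2: _ => [|u n U _ le_Un]; first by rewrite cards0.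
by rewrite (leq_trans (leq_card_setU _ U)) ?leq_add ?WReach_le.
Qed.

Lemma card_code_letters X : #|code_letters X| <= (1 + c * #|X|) * 2 ^ r.+1.
Proof.
rewrite cardsX card_powerset cardsT card_ord leq_mul2r cardsU1.
rewrite card_imset; last by move=> ? ? [].
by rewrite leq_add ?card_WReach_cover ?leq_b1 ?orbT.
Qed.

Lemma shattered_card_bound X : shattered e r X ->
  2 ^ #|X| <= ((1 + c * #|X|) * 2 ^ r.+1) ^ c.
Proof.
move=> /forallP shX.
have traces : powerset X \subset decode X @: ffun_on (mem (code_letters X)).
  apply/subsetP => S; rewrite powersetE => SX.
  have /existsP [v /eqP <-] := implyP (shX S) SX.
  by rewrite -decode_encode imset_f ?encode_on.
rewrite -card_powerset (leq_trans (subset_leq_card traces)) //.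
rewrite (leq_trans (leq_imset_card _ _)) // card_ffun_on card_ord.
have [-> | c_gt0] := posnP c; first by rewrite !expn0.
by rewrite leq_exp2r ?card_code_letters.
Qed.

End TraceCodes.

Section Shattering.
Variables (T : finType) (e : rel T) (r : nat).

Lemma wcol_attained : exists L : {ffun T -> 'I_#|T|},
  forall v, #|WReach e r L v| <= wcol e r.
Proof.
apply: (big_ind (fun n => exists L : {ffun T -> 'I_#|T|}, forall v, #|WReach e r L v| <= n)).
- by exists [ffun x => enum_rank x] => v; apply: max_card.
- by move=> m n [Lm le_m] [Ln le_n]; case: leqP => _; [exists Lm | exists Ln].
- by move=> L _; exists L => v; apply: leq_bigmax.
Qed.

Lemma shatteredS (X Y : {set T}) : Y \subset X -> shattered e r X -> shattered e r Y.
Proof.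
move=> YX /forallP shX; apply/forallP => S; apply/implyP => SY.
have /existsP [v /eqP XvS] := implyP (shX S) (subset_trans SY YX).
apply/existsP; exists v; apply/eqP.
by rewrite -(setIidPl YX) -setIA XvS; apply/setIidPr.
Qed.

End Shattering.

Lemma subset_of_card (T : finType) (X : {set T}) n :
  n <= #|X| -> exists2 Y : {set T}, Y \subset X & #|Y| = n.
Proof.
move=> n_le; exists [set x in take n (enum X)].
  by apply/subsetP => x; rewrite inE => /mem_take; rewrite mem_enum.
rewrite cardsE (card_uniqP _) ?take_uniq ?enum_uniq // size_take -cardE.
by case: ltngtP n_le => // ->.
Qed.

Lemma cube_lt_exp8 n : 0 < n -> 6 * n ^ 3 < 8 ^ n.
Proof.
elim: n => [// | [// | n] IH] _.
have := IH isT; rewrite [8 ^ n.+2]expnS.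
have : n.+2 ^ 3 <= (2 * n.+1) ^ 3 by rewrite leq_exp2r //; lia.
nia.
Qed.

Lemma code_count_lt r c :
  ((1 + c * ((r + 2) * (2 * c) ^ 2).+1) * 2 ^ r.+1) ^ c < 2 ^ ((r + 2) * (2 * c) ^ 2).+1.
Proof.
set n := ((r + 2) * (2 * c) ^ 2).+1.
have [c0 | c_gt0] := posnP c; first by rewrite c0 expn0 /n expnS leq_pmulr ?expn_gt0.
have x_gt0 : 0 < c * (r + 2) by rewrite muln_gt0 c_gt0 addn_gt0 orbT.
have base_lt : 1 + c * n < 2 ^ (3 * (c * (r + 2))).
  by rewrite mulnC expnM (leq_trans _ (cube_lt_exp8 x_gt0)) // /n; nia.
apply: (@leq_trans ((2 ^ (3 * (c * (r + 2))) * 2 ^ r.+1) ^ c)).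
  by rewrite ltn_exp2r // ltn_pmul2r ?expn_gt0.
by rewrite -expnD -expnM leq_exp2l // /n; nia.
Qed.

Theorem mainTheorem15 (T : finType) (e : rel T) (r : nat) (hr : 1 <= r) :
  vcdim e r <= (r + 2) * (2 * wcol e r) ^ 2.
Proof.
(* The bound holds for r = 0 as well. *)
have [L WReach_le] := wcol_attained e r.
apply/bigmax_leqP => X shX; rewrite leqNgt; apply/negP => bound_lt.
have [Y YX cardY] := subset_of_card bound_lt.
have := shattered_card_bound WReach_le (shatteredS YX shX).
by rewrite cardY leqNgt code_count_lt.
Qed.
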